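(* Consider an ESP instance with integer weights, fix $\varepsilon>0$, let $W=\sum_{v\in V}w_v$ and $\omega=\lceil \log W/\log(1+\varepsilon)\rceil$. For each $i\in\{0,\dots,\omega\}$ let $T_i$ be the tree obtained by applying a polynomial-time $5/2$-approximation algorithm for the quota version of the prize-collecting Steiner tree problem with quota $q_i=W-W(1+\varepsilon)^{-i}$ (in particular $T_0=(\{r\},\emptyset)$ and $T_\omega$ contains all vertices of positive weight). Let $H$ be the directed graph with vertex set $\{0,\dots,\omega\}$, arcs $(i,j)$ for all $i<j$, and arc costs $c_{i,j}=W(1+\varepsilon)^{-i}\ell(T_j)$, where $\ell(T)=\sum_{e\in E(T)}\ell_e$. Let $P=(n_0,\dots,n_l)$ with $n_0=0$, $n_l=\omega$ be a shortest $(0,\omega)$-path in $H$, and let $\sigma_{\mathrm{Alg}}$ be the expanding search pattern built in $l$ phases, where in phase $j\in\{1,\dots,l\}$ the edges of $T_{n_j}$ having fewer than two endpoints in $\bigcup_{i=0}^{j-1}V(T_{n_i})$ are appended in an order such that the set of explored vertices stays connected (edges both of whose endpoints are already explored being skipped). Then $L(\sigma_{\mathrm{Alg}})\le z$, where $z$ is the cost of a shortest $(0,\omega)$-path in $H$.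
   Context: ESP: connected undirected graph $G=(V,E)$, root $r$, edge lengths $\ell_e\in\mathbb{Z}_{\ge0}$, vertex weights $w_v\in\mathbb{Z}_{\ge0}$, $V^*=\{v:w_v>0\}$. An expanding search pattern is a sequence $\sigma=(e_1,\dots,e_m)$ of edges with $r\in e_1$ such that $\{e_1,\dots,e_i\}$ is a tree for every $i$. For $v\in V^*\setminus\{r\}$, $k_v=\min\{i:v\in e_i\}$, $k_r=0$, latency $L_v(\sigma)=\sum_{i\le k_v}\ell_{e_i}$, total latency $L(\sigma)=\sum_{v\in V^*}w_vL_v(\sigma)$. Quota version of prize-collecting Steiner tree with quota $q$: find a tree in $G$ containing $r$ whose vertices have total weight at least $q$, minimizing its length; a $5/2$-approximation returns such a tree of length at most $5/2$ times the minimum. The cost of a path in $H$ is the sum of its arc costs. *)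

From Stdlib Require Import Reals.
From mathcomp Require Import all_boot.
Set Implicit Arguments. Unset Strict Implicit. Unset Printing Implicit Defensive.

Section ESP.
(* Graph G = (V, E): every edge e has the two endpoints src e and dst e
   (undirected: the orientation plays no role). *)
Variables (V E : finType) (src dst : E -> V).

Definition ends (e : E) : {set V} := [set src e; dst e].

Definition adj (ET : {set E}) : rel V :=
  fun x y => [exists e in ET, ((src e == x) && (dst e == y))
                           || ((src e == y) && (dst e == x))].

Definition is_tree (T : {set V} * {set E}) : Prop :=
  [/\ T.1 != set0,
      (forall e, e \in T.2 -> src e \in T.1 /\ dst e \in T.1),
      (forall x y, x \in T.1 -> y \in T.1 -> connect (adj T.2) x y)
    & #|T.2|.+1 = #|T.1| ].

Definition graph_connected : Prop :=
  forall x y : V, connect (adj setT) x y.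

Definition verts_of (s : seq E) : {set V} := \bigcup_(e <- s) ends e.

Definition explored (r : V) (s : seq E) : {set V} := r |: verts_of s.

Definition is_esp (r : V) (sigma : seq E) : Prop :=
  (forall e0, sigma != [::] -> r \in ends (head e0 sigma)) /\
  (forall i, 0 < i <= size sigma ->
     is_tree (verts_of (take i sigma), [set e | e \in take i sigma])).

(* latency of v: 0 for the root; otherwise the total length of e_1..e_{k_v},
   k_v the first index with v in e_{k_v} (if v is never covered this is the
   length of the whole sequence; irrelevant here). *)
Definition latency (r : V) (len : E -> nat) (sigma : seq E) (v : V) : nat :=
  if v == r then 0
  else \sum_(e <- take (find (fun e => v \in ends e) sigma).+1 sigma) len e.

Definition total_latency (r : V) (w : V -> nat) (len : E -> nat)
  (sigma : seq E) : nat :=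
  \sum_(v | 0 < w v) w v * latency r len sigma v.

Definition tree_length (len : E -> nat) (ET : {set E}) : nat :=
  \sum_(e in ET) len e.

Definition set_weight (w : V -> nat) (VT : {set V}) : nat :=
  \sum_(v in VT) w v.

Definition total_weight (w : V -> nat) : nat := \sum_(v : V) w v.

End ESP.

Local Open Scope R_scope.

Definition is_ceil_nat (x : R) (n : nat) : Prop :=
  INR n - 1 < x <= INR n.

Definition quota (W : nat) (eps : R) (i : nat) : R :=
  INR W - INR W * / (1 + eps) ^ i.

Definition approx_ratio : R := 5 / 2.

Definition is_omega (W : nat) (eps : R) (omega : nat) : Prop :=
  is_ceil_nat (ln (INR W) / ln (1 + eps)) omega.

Definition arc_cost (W : nat) (eps : R) (lT : nat -> nat) (i j : nat) : R :=
  INR W * / (1 + eps) ^ i * INR (lT j).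

Definition is_Hpath (omega : nat) (ns : seq nat) : Prop :=
  [/\ ns != [::], head 0%N ns = 0%N, last 0%N ns = omega & sorted ltn ns].

Definition path_cost (c : nat -> nat -> R) (ns : seq nat) : R :=
  \big[Rplus/0]_(p <- zip ns (behead ns)) c p.1 p.2.

(* Let E_m be the set explored after the first m phases and a_m the length of
   phase m.  Phase m consists of distinct edges of T_{n_{m+1}}, so
   a_m <= l(T_{n_{m+1}}).  By induction on m every T_{n_i} with i <= m lies in
   E_m: it is a tree through r, and each of its edges either has both ends in
   earlier trees or is searched (or skipped as already explored) in phase m.
   A vertex pays a_m only if it is still unexplored when phase m starts, hence
   lies outside T_{n_m}; the weight of these vertices is at most
   W - w(T_{n_m}) <= W (1+eps)^{-n_m} by the quota.  Summing over the phases,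
   L(sigma) <= sum_m c_{n_m, n_{m+1}}, the cost of P. *)

From Stdlib Require Import Reals Lra.
From mathcomp Require Import all_boot.
Set Implicit Arguments. Unset Strict Implicit. Unset Printing Implicit Defensive.

Section Exploration.
Variables (V E : finType) (src dst : E -> V).

Lemma in_verts_of (s : seq E) v :
  (v \in verts_of src dst s) = has (fun e => v \in ends src dst e) s.
Proof.
elim: s => [|e s IH]; first by rewrite /verts_of big_nil in_set0.
by rewrite /verts_of big_cons in_setU -/(verts_of _ _ _) IH.
Qed.

Lemma verts_of_cat (s t : seq E) :
  verts_of src dst (s ++ t) = verts_of src dst s :|: verts_of src dst t.
Proof. by apply/setP => v; rewrite in_setU !in_verts_of has_cat. Qed.

Lemma explored_nil r : explored src dst r [::] = [set r].
Proof. by rewrite /explored /verts_of big_nil setU0. Qed.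

Lemma explored_cat r (s t : seq E) :
  explored src dst r (s ++ t) = explored src dst r s :|: verts_of src dst t.
Proof. by rewrite /explored verts_of_cat setUA. Qed.

Lemma explored_catl r (s t : seq E) :
  explored src dst r s \subset explored src dst r (s ++ t).
Proof. by rewrite explored_cat subsetUl. Qed.

Lemma connect_adj_closed (ET : {set E}) (S : {set V}) x y :
  (forall e, e \in ET -> (src e \in S) && (dst e \in S)) ->
  connect (adj src dst ET) x y -> x \in S -> y \in S.
Proof.
move=> ET_S; have cl : closed (adj src dst ET) S.
  move=> x' y' /existsP[e /andP[/ET_S/andP[se de]]].
  by case/orP=> /andP[/eqP<- /eqP<-]; rewrite se de.
by move=> /(closed_connect cl) ->.
Qed.

(* A repeated edge would have both ends explored at its second occurrence. *)
Lemma uniq_frontier_seq r (s : seq E) :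
  (forall s1 e s2, s = s1 ++ e :: s2 ->
     (src e \in explored src dst r s1) != (dst e \in explored src dst r s1)) ->
  uniq s.
Proof.
elim/last_ind: s => [|s e IH] frontier //.
rewrite rcons_uniq; apply/andP; split.
  apply/negP => es; have := frontier s e [::]; rewrite cats1 => /(_ erefl).
  suff ends_expl u : u \in ends src dst e -> u \in explored src dst r s.
    by rewrite !ends_expl ?eqxx // /ends !inE eqxx ?orbT.
  by move=> ue; rewrite /explored in_setU1 in_verts_of; apply/orP; right; apply/hasP; exists e.
by apply: IH => s1 e' s2 def_s; apply: (frontier s1 e' (rcons s2 e)); rewrite def_s rcons_cat.
Qed.

End Exploration.

Section Latency.
Variables (V E : finType) (src dst : E -> V) (r : V) (len : E -> nat).
Local Notation explored := (explored src dst r).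

Lemma latency_le_phases (ss : seq (seq E)) v :
  v != r -> v \in explored (flatten ss) ->
  latency src dst r len (flatten ss) v <=
  \sum_(0 <= m < size ss)
     (v \notin explored (flatten (take m ss))) * \sum_(e <- nth [::] ss m) len e.
Proof.
move=> vr; rewrite /latency (negbTE vr).
elim: ss => [|s ss IH] /=; first by rewrite explored_nil in_set1 (negbTE vr).
rewrite big_nat_recl //= explored_nil in_set1 (negbTE vr) mul1n find_cat.
case: ifP => [covered_s _ | uncovered_s v_ss].
  rewrite takel_cat; last by rewrite -has_find.
  apply: leq_trans (leq_addr _ _); set k := (find _ s).+1.
  by rewrite -{2}(cat_take_drop k s) big_cat leq_addr.
have unexplored_s t : (v \in explored (s ++ t)) = (v \in explored t).
  by rewrite /explored verts_of_cat !in_setU1 in_setU in_verts_of uncovered_s.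
rewrite take_cat ltnNge leqW ?leq_addr //= subSn ?leq_addr // addKn big_cat.
rewrite leq_add2l; apply: leq_trans (IH _) _; first by rewrite -unexplored_s.
by under [leqRHS]eq_bigr do rewrite unexplored_s.
Qed.

Lemma total_latency_le_phases (w : V -> nat) (ss : seq (seq E)) :
  (forall v, 0 < w v -> v \in explored (flatten ss)) ->
  total_latency src dst r w len (flatten ss) <=
  \sum_(0 <= m < size ss)
     (\sum_(e <- nth [::] ss m) len e) * set_weight w (~: explored (flatten (take m ss))).
Proof.
move=> covered; rewrite /total_latency.
apply: leq_trans (_ : \sum_(v | 0 < w v) \sum_(0 <= m < size ss)
    w v * ((v \notin explored (flatten (take m ss))) * \sum_(e <- nth [::] ss m) len e) <= _).
  apply: leq_sum => v wv; rewrite -big_distrr leq_mul2l; apply/orP; right.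
  have [-> | vr] := eqVneq v r; first by rewrite /latency eqxx.
  exact: latency_le_phases (covered v wv).
rewrite exchange_big; apply: leq_sum => m _.
set a := \sum_(e <- _) _; set Em := explored _.
rewrite (eq_bigr (fun v => a * (w v * (v \notin Em)))) => [|v _]; last by rewrite mulnA mulnC.
rewrite -big_distrr leq_mul2l /set_weight [leqRHS]big_mkcond; apply/orP; right.
rewrite [leqRHS](bigID (fun v => 0 < w v)) /=; apply: leq_trans (leq_addr _ _).
by apply: leq_sum => v _; rewrite in_setC; case: (_ \notin _); rewrite ?muln1 ?muln0.
Qed.

End Latency.

Lemma uniq_nth_flatten (T : eqType) (ss : seq (seq T)) m :
  uniq (flatten ss) -> uniq (nth [::] ss m).
Proof.
elim: ss m => [|s ss IH] [|m] //=; rewrite cat_uniq => /and3P[uniq_s _ uniq_ss] //.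
exact: IH.
Qed.

Lemma set_weight_compl_le (V : finType) (w : V -> nat) (A S : {set V}) :
  A \subset S -> set_weight w (~: S) + set_weight w A <= total_weight w.
Proof.
move=> AS; rewrite /total_weight (bigID (mem A)) addnC leq_add2l /set_weight.
rewrite big_mkcond [leqRHS]big_mkcond; apply: leq_sum => v _ /=.
by rewrite in_setC; case: ifP => // vS; rewrite (contraNN (subsetP AS v) vS).
Qed.

Section Phases.
Variables (V E : finType) (src dst : E -> V) (r : V).
Variables (Tn : nat -> {set V} * {set E}) (sigmas : seq (seq E)).
Local Notation explored := (explored src dst r).
Local Notation reached j := (\bigcup_(i < j.+1) (Tn i).1).

Hypothesis Tn0 : (Tn 0).1 = [set r].
Hypothesis Tn_connect : forall j, j <= size sigmas ->
  forall x, x \in (Tn j).1 -> connect (adj src dst (Tn j).2) r x.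
Hypothesis phase_sound : forall j, j < size sigmas ->
  forall e, e \in nth [::] sigmas j -> e \in (Tn j.+1).2.
Hypothesis phase_complete : forall j, j < size sigmas ->
  forall e, e \in (Tn j.+1).2 -> ~~ ((src e \in reached j) && (dst e \in reached j)) ->
  (src e \in explored (flatten (take j.+1 sigmas))) &&
  (dst e \in explored (flatten (take j.+1 sigmas))).

Lemma reached_explored k :
  k <= size sigmas -> reached k \subset explored (flatten (take k sigmas)).
Proof.
elim: k => [_ | k IH lt_k]; first by rewrite big_ord1 Tn0 take0 explored_nil.
have reached_k : reached k \subset explored (flatten (take k.+1 sigmas)).
  apply: subset_trans (IH (ltnW lt_k)) _.
  by rewrite (take_nth [::] lt_k) flatten_rcons explored_catl.
rewrite big_ord_recr /= subUset reached_k /=; apply/subsetP => x Tx.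
apply: connect_adj_closed (Tn_connect lt_k Tx) _; last by rewrite /explored setU11.
move=> e Te; case reached_e: ((src e \in reached k) && (dst e \in reached k)).
  by case/andP: reached_e => /(subsetP reached_k) -> /(subsetP reached_k) ->.
exact: phase_complete (negbT reached_e).
Qed.

Lemma phase_length_le (len : E -> nat) j :
  uniq (flatten sigmas) -> j < size sigmas ->
  \sum_(e <- nth [::] sigmas j) len e <= tree_length len (Tn j.+1).2.
Proof.
move=> uniq_sigma lt_j; rewrite /tree_length -big_enum.
apply: (uniq_sub_le_big (le := leq) leqnn (fun x y => leq_addr y x)).
- exact: uniq_nth_flatten.
- exact: enum_uniq.
- by move=> e /(phase_sound lt_j); rewrite mem_enum.
Qed.

End Phases.

Lemma Hpath_nth_le omega ns i : is_Hpath omega ns -> nth 0 ns i <= omega.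
Proof.
case=> ns_nil _ <- sorted_ns.
have [lt_i | size_le_i] := ltnP i (size ns); last by rewrite nth_default.
rewrite -nth_last; apply: (sorted_leq_nth leq_trans leqnn) => //.
- by apply: sub_sorted sorted_ns => x y /ltnW.
- by rewrite inE prednK // lt0n size_eq0.
- by rewrite -ltnS prednK // lt0n size_eq0.
Qed.

Section RealBounds.
Local Open Scope R_scope.

Lemma path_cost_nth c ns :
  path_cost c ns = \big[Rplus/0]_(0 <= m < (size ns).-1) c (nth 0%N ns m) (nth 0%N ns m.+1).
Proof.
rewrite /path_cost; elim: ns => [|a [|b ns] IH]; try by rewrite big_nil big_geq.
by rewrite /= big_cons IH big_nat_recl.
Qed.

Lemma INR_sum (I : Type) (s : seq I) (F : I -> nat) :
  INR (\sum_(i <- s) F i) = \big[Rplus/0]_(i <- s) INR (F i).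
Proof. exact: (big_morph INR plus_INR). Qed.

Lemma Rsum_le (I : Type) (s : seq I) (P : pred I) (f g : I -> R) :
  (forall i, P i -> f i <= g i) ->
  \big[Rplus/0]_(i <- s | P i) f i <= \big[Rplus/0]_(i <- s | P i) g i.
Proof. by apply: big_ind2 => [|*]; [exact: Rle_refl | exact: Rplus_le_compat]. Qed.

Lemma arc_cost_ge W eps (lT : nat -> nat) i j (a u s : nat) :
  (a <= lT j)%N -> (u + s <= W)%N -> quota W eps i <= INR s ->
  INR (a * u) <= arc_cost W eps lT i j.
Proof.
move=> /leP/le_INR le_a /leP/le_INR; rewrite plus_INR /quota /arc_cost mult_INR => le_us le_q.
rewrite Rmult_comm; apply: Rmult_le_compat => //; try exact: pos_INR; lra.
Qed.

End RealBounds.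

Theorem lemma6
  (V E : finType) (src dst : E -> V) (r : V)
  (len : E -> nat) (w : V -> nat) (eps : R) (omega : nat)
  (T : nat -> {set V} * {set E})
  (ns : seq nat) (sigmas : seq (seq E)) :
  graph_connected src dst ->
  Rlt 0 eps ->
  is_omega (total_weight w) eps omega ->
  (* T_i is the output of a 5/2-approximation for the quota problem, quota q_i *)
  (forall i, i <= omega ->
     [/\ is_tree src dst (T i), r \in (T i).1,
         Rle (quota (total_weight w) eps i) (INR (set_weight w (T i).1))
       & forall T' : {set V} * {set E},
           is_tree src dst T' -> r \in T'.1 ->
           Rle (quota (total_weight w) eps i) (INR (set_weight w T'.1)) ->
           Rle (INR (tree_length len (T i).2))
               (Rmult approx_ratio (INR (tree_length len T'.2)))]) ->
  T 0 = ([set r], set0) ->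
  (forall v, 0 < w v -> v \in (T omega).1) ->
  (* arc costs c_{i,j} = W (1+eps)^(-i) l(T_j) of H *)
  let c := arc_cost (total_weight w) eps (fun j => tree_length len (T j).2) in
  (* P = ns is a shortest (0, omega)-path in H *)
  is_Hpath omega ns ->
  (forall ns', is_Hpath omega ns' -> Rle (path_cost c ns) (path_cost c ns')) ->
  (* sigma_Alg = flatten sigmas; phase j+1 appends  nth [::] sigmas j *)
  let sigma := flatten sigmas in
  size sigmas = (size ns).-1 ->
  (forall j, j < size sigmas ->
     let U := \bigcup_(i < j.+1) (T (nth 0 ns i)).1 in
     let Tj := T (nth 0 ns j.+1) in
     (* appended edges are edges of T_{n_{j+1}} with < 2 endpoints in U *)
     (forall e, e \in nth [::] sigmas j ->
        e \in Tj.2 /\ ~~ ((src e \in U) && (dst e \in U))) /\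
     (* each such edge is appended or skipped (both endpoints explored) *)
     (forall e, e \in Tj.2 -> ~~ ((src e \in U) && (dst e \in U)) ->
        (src e \in explored src dst r (flatten (take j.+1 sigmas))) &&
        (dst e \in explored src dst r (flatten (take j.+1 sigmas))))) ->
  (* explored set stays connected; no appended edge has both ends explored *)
  (forall s1 e s2, sigma = s1 ++ e :: s2 ->
     (src e \in explored src dst r s1) != (dst e \in explored src dst r s1)) ->
  Rle (INR (total_latency src dst r w len sigma)) (path_cost c ns).
Proof.
move=> _ _ _ approx T0 covers_support c Hpath _ sigma size_sigmas phases frontier.
set Tn := fun m => T (nth 0 ns m).
have Tn0 : (Tn 0).1 = [set r] by rewrite /Tn nth0; case: Hpath => _ -> _ _; rewrite T0.
have Tn_connect j : j <= size sigmas ->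
    forall x, x \in (Tn j).1 -> connect (adj src dst (Tn j).2) r x.
  by have [[_ _ conn _] rT _ _] := approx _ (Hpath_nth_le j Hpath); move=> _ x; exact: conn rT.
have reached := reached_explored Tn0 Tn_connect (fun j lt_j => (phases j lt_j).2).
have Tn_last : Tn (size sigmas) = T omega.
  by case: Hpath => _ _ <- _; rewrite /Tn size_sigmas nth_last.
have covered v : 0 < w v -> v \in explored src dst r (flatten sigmas).
  move=> wv; rewrite -(take_size sigmas); apply: (subsetP (reached _ (leqnn _))).
  by apply/bigcupP; exists ord_max; rewrite //= Tn_last covers_support.
apply: Rle_trans (le_INR _ _ (leP (total_latency_le_phases len covered))) _.
rewrite INR_sum path_cost_nth -size_sigmas big_seq [X in Rle _ X]big_seq.
apply: Rsum_le => m; rewrite mem_index_iota => /andP[_ lt_m].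
apply: arc_cost_ge.
- apply: (phase_length_le (Tn := Tn)) (uniq_frontier_seq frontier) lt_m.
  by move=> j lt_j e /((phases j lt_j).1 e) [].
- apply: set_weight_compl_le; apply: subset_trans (reached m (ltnW lt_m)).
  exact: (bigcup_sup ord_max).
- by have [_ _ quota_m _] := approx _ (Hpath_nth_le m Hpath).
Qed.
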